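(* Let $\mathcal{X},\mathcal{A}$ be finite sets, let $P_{A|X}$ be a channel, and for $n\ge1$ let $P^{\times n}_{XAB}(x^n,a^n,b^n)=|\mathcal{X}|^{-n}\prod_{i=1}^n P_{A|X}(a_i|x_i)P_{A|X}(b_i|x_i)$ on $\mathcal{X}^n\times\mathcal{A}^n\times\mathcal{A}^n$. Let $\omega_{\mathrm{ns}}(n)=\sup_Q\sum_{x^n,a^n,b^n}P^{\times n}_{XAB}(x^n,a^n,b^n)Q(x^n,x^n|a^n,b^n)$, the supremum over all no-signalling conditional distributions $Q$. Then $$\limsup_{n\to\infty}\frac{\log\omega_{\mathrm{ns}}(n)}{n}\le\max_{Q_{XA}}\Big(I(X;A)_Q-2D(Q_{A|X}\,\|\,P_{A|X}\mid Q_X)\Big)-\log|\mathcal{X}|,$$ the maximum being over all probability distributions $Q_{XA}$ on $\mathcal{X}\times\mathcal{A}$.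
   Context: Logarithms are base $2$. A no-signalling conditional distribution is a conditional distribution $Q(y,z|a^n,b^n)$ on $\mathcal{X}^n\times\mathcal{X}^n$ given $(a^n,b^n)\in\mathcal{A}^n\times\mathcal{A}^n$ such that $\sum_y Q(y,z|a^n,b^n)$ does not depend on $a^n$ and $\sum_z Q(y,z|a^n,b^n)$ does not depend on $b^n$. $I(X;A)_Q=H(X)_Q+H(A)_Q-H(X,A)_Q$ (Shannon entropies); $D(P\|Q)=\sum_x P(x)\log\frac{P(x)}{Q(x)}$; $D(Q_{A|X}\|P_{A|X}\mid Q_X)=\sum_x Q_X(x)D(Q_{A|X=x}\|P_{A|X=x})$. *)

From HB Require Import structures.
From mathcomp Require Import all_boot all_order all_algebra.
From mathcomp Require Import all_classical all_reals all_analysis.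
Set Implicit Arguments. Unset Strict Implicit. Unset Printing Implicit Defensive.
Import Order.TTheory GRing.Theory Num.Theory.
Local Open Scope ring_scope.

Section Defs.
Context {R : realType}.

Definition log2 (x : R) : R := ln x / ln 2.

Definition is_dist (T : finType) (p : T -> R) : Prop :=
  (forall t, 0 <= p t) /\ \sum_(t : T) p t = 1.

Definition is_channel (X A : finType) (W : X -> A -> R) : Prop :=
  forall x, is_dist (W x).

Definition entropy (T : finType) (p : T -> R) : R :=
  - \sum_(t : T) (if p t == 0 then 0 else p t * log2 (p t)).

Definition KLdiv (T : finType) (p r : T -> R) : \bar R :=
  (\sum_(t : T)
     (if p t == 0%R then 0%E
      else if r t == 0%R then +oo%E
      else (p t * log2 (p t / r t))%:E))%E.

Section Joint.
Variables (X A : finType) (q : X -> A -> R).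
Definition margX (x : X) : R := \sum_(a : A) q x a.
Definition margA (a : A) : R := \sum_(x : X) q x a.
Definition joint (xa : X * A) : R := q xa.1 xa.2.
Definition mutinfo : R := entropy margX + entropy margA - entropy joint.
(* conditional Q_{A|X=x} (irrelevant when Q_X(x) = 0, since it is weighted by 0) *)
Definition condA (x : X) (a : A) : R := q x a / margX x.
Definition condKL (W : X -> A -> R) : \bar R :=
  (\sum_(x : X) (margX x)%:E * KLdiv (condA x) (W x))%E.
End Joint.

Definition Pn (X A : finType) (W : X -> A -> R) (n : nat)
    (x : {ffun 'I_n -> X}) (a b : {ffun 'I_n -> A}) : R :=
  (#|X|%:R ^- n) * \prod_(i < n) (W (x i) (a i) * W (x i) (b i)).

Definition no_signalling (X A : finType) (n : nat)
    (Q : {ffun 'I_n -> X} -> {ffun 'I_n -> X} ->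
         {ffun 'I_n -> A} -> {ffun 'I_n -> A} -> R) : Prop :=
  (forall y z a b, 0 <= Q y z a b) /\
  (forall a b, \sum_(y : {ffun 'I_n -> X}) \sum_(z : {ffun 'I_n -> X}) Q y z a b = 1) /\
  (forall z a a' b, \sum_(y : {ffun 'I_n -> X}) Q y z a b = \sum_(y : {ffun 'I_n -> X}) Q y z a' b) /\
  (forall y a b b', \sum_(z : {ffun 'I_n -> X}) Q y z a b = \sum_(z : {ffun 'I_n -> X}) Q y z a b').

Definition ns_value (X A : finType) (W : X -> A -> R) (n : nat)
    (Q : {ffun 'I_n -> X} -> {ffun 'I_n -> X} ->
         {ffun 'I_n -> A} -> {ffun 'I_n -> A} -> R) : R :=
  \sum_(x : {ffun 'I_n -> X}) \sum_(a : {ffun 'I_n -> A}) \sum_(b : {ffun 'I_n -> A})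
     Pn W x a b * Q x x a b.

Definition omega_ns (X A : finType) (W : X -> A -> R) (n : nat) : R :=
  sup [set v | exists Q, no_signalling Q /\ v = @ns_value X A W n Q].

Definition objective (X A : finType) (W : X -> A -> R) (q : X -> A -> R) : \bar R :=
  ((mutinfo q)%:E - 2%:E * condKL q W)%E.

End Defs.

From HB Require Import structures.
From mathcomp Require Import all_boot all_order all_algebra.
From mathcomp Require Import all_classical all_reals all_analysis.
From mathcomp Require Import ring lra.
Import Order.TTheory GRing.Theory Num.Theory.
Set Implicit Arguments. Unset Strict Implicit. Unset Printing Implicit Defensive.
Local Open Scope ring_scope.

(* Fix a no-signalling strategy Q, and let Q1(x|a) and Q2(x|b) be the guess distributions of
   the two parties, which do not depend on the other party's input. Then Q(x,x|a,b) is at most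
   sqrt(Q1(x|a) Q2(x|b)), so omega_ns(n) <= T := sum P^n(x,a,b) sqrt(Q1(x|a) Q2(x|b)).
   Tilt P^n by this weight and let q_i^A, q_i^B be the laws of (x_i,a_i) and (x_i,b_i) under
   the tilted distribution r. The Gibbs variational inequality gives ln T <= E_r[h] whenever
   weight * exp(-h) has total mass at most 1. Choose h so that weight * exp(-h) is the geometric
   mean of two product channels of mass at most 1, built from Q1, Q2 and the marginals and
   conditionals of the q_i. Then h splits coordinatewise: E_r[h] is -n ln|X| plus half the sum
   of the single-letter objectives (in nats) of the q_i^A and q_i^B, each at most the maximum. *)

Section RealInequalities.
Variable R : realType.

Lemma ln_le_subr1 (x : R) : 0 < x -> ln x <= x - 1.
Proof. by move=> x0; have := @le_ln1Dx R (x - 1); rewrite addrCA subrr addr0; apply; lra. Qed.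

Lemma ln_prod (I : finType) (F : I -> R) :
  (forall i, 0 < F i) -> ln (\prod_i F i) = \sum_i ln (F i).
Proof.
move=> F0; suff [] : 0 < \prod_i F i /\ ln (\prod_i F i) = \sum_i ln (F i) by [].
elim/big_rec2: _ => [|i s p _ [p0 <-]]; first by rewrite ln1 ltr01.
by rewrite mulr_gt0 // lnM ?posrE.
Qed.

Lemma ln_sqrt (x : R) : 0 < x -> ln (Num.sqrt x) = ln x / 2.
Proof.
move=> x0; have s0 : 0 < Num.sqrt x by rewrite sqrtr_gt0.
have : ln (Num.sqrt x * Num.sqrt x) = ln x by rewrite -expr2 sqr_sqrtr // ltW.
by rewrite lnM ?posrE // => <-; lra.
Qed.

Lemma sqrtrM_le_mean (u v : R) : 0 <= u -> 0 <= v -> Num.sqrt (u * v) <= (u + v) / 2.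
Proof.
move=> u0 v0; rewrite sqrtrM //.
have : 0 <= (Num.sqrt u - Num.sqrt v) ^+ 2 by rewrite sqr_ge0.
rewrite sqrrB !sqr_sqrtr //; lra.
Qed.

Lemma le_sqrtrM (q u v : R) : 0 <= q -> q <= u -> q <= v -> q <= Num.sqrt (u * v).
Proof.
move=> q0 qu qv; rewrite -[q]ger0_norm // -sqrtr_sqr ler_sqrt ?expr2 ?ler_pM //.
exact: mulr_ge0 (le_trans q0 qu) (le_trans q0 qv).
Qed.

Lemma gibbs_variational (Z : finType) (w s h : Z -> R) :
  (forall z, 0 <= w z) -> 0 < \sum_z w z ->
  (forall z, 0 <= s z) -> \sum_z s z <= 1 ->
  (forall z, 0 < w z -> 0 < s z /\ ln (s z) = ln (w z) - h z) ->
  ln (\sum_z w z) <= \sum_z w z / (\sum_z w z) * h z.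
Proof.
move=> w0 T0 s0 s1 wsh; set T := \sum_z w z.
have r1 : \sum_z w z / T = 1 by rewrite -mulr_suml divff ?gt_eqF.
have termwise z : w z / T * (ln T - h z) <= s z - w z / T.
  have [->|wz] := eqVneq (w z) 0; first by rewrite !mul0r subr0.
  have wp : 0 < w z by rewrite lt_def wz w0.
  have [sp lns] := wsh z wp; have rp : 0 < w z / T by exact: divr_gt0.
  have -> : ln T - h z = ln (s z / (w z / T)) by rewrite !ln_div ?posrE // lns; ring.
  have := ler_wpM2l (ltW rp) (ln_le_subr1 (divr_gt0 sp rp)).
  by rewrite mulrBr mulr1 [_ * (_ / _)]mulrC divfK ?gt_eqF.
have -> : ln T = \sum_z w z / T * ln T by rewrite -mulr_suml r1 mul1r.
rewrite -subr_le0 -sumrB; under eq_bigr do rewrite -mulrBr.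
apply: le_trans (ler_sum _ (fun z _ => termwise z)) _.
by rewrite sumrB r1 subr_le0.
Qed.

End RealInequalities.

Section PairLaw.
Variables (R : realType) (Z X A : finType) (r : Z -> R) (phi : Z -> X * A).
Hypothesis r_ge0 : forall z, 0 <= r z.

Definition pair_law (x : X) (a : A) : R := \sum_(z | phi z == (x, a)) r z.

Lemma sum_pair_law (g : X -> A -> R) :
  \sum_x \sum_a pair_law x a * g x a = \sum_z r z * g (phi z).1 (phi z).2.
Proof.
rewrite pair_bigA /= [RHS](partition_big phi xpredT) //=.
apply: eq_bigr => -[x a] _; rewrite big_distrl /=.
by apply: eq_bigr => z /eqP ->.
Qed.

Lemma pair_law_dist : is_dist r -> is_dist (joint pair_law).
Proof.
move=> [r0 r1]; split=> [t|]; first by apply: sumr_ge0 => z _; exact: r0.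
have := sum_pair_law (fun _ _ => 1); under eq_bigr do under eq_bigr do rewrite mulr1.
by rewrite pair_bigA /=; under [RHS]eq_bigr do rewrite mulr1; rewrite r1.
Qed.

Lemma le_pair_law z : r z <= pair_law (phi z).1 (phi z).2.
Proof. by rewrite /pair_law -surjective_pairing (bigD1 z) //= lerDl sumr_ge0. Qed.

Lemma pair_law_gt0 x a : 0 < pair_law x a -> exists z, phi z = (x, a) /\ 0 < r z.
Proof.
move=> pos; apply/not_existsP => none; move: pos; rewrite /pair_law big1 ?ltxx //.
move=> z /eqP phiz; apply/eqP; rewrite eq_le r_ge0 andbT leNgt.
by apply/negP => rz; apply: (none z).
Qed.

End PairLaw.

Section Marginals.
Variables (R : realType) (X A : finType) (q : X -> A -> R).
Hypothesis q_ge0 : forall x a, 0 <= q x a.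

Lemma le_margX x a : q x a <= margX q x.
Proof. by rewrite /margX (bigD1 a) //= lerDl sumr_ge0. Qed.

Lemma le_margA x a : q x a <= margA q a.
Proof. by rewrite /margA (bigD1 x) //= lerDl sumr_ge0. Qed.

Lemma margA_ge0 a : 0 <= margA q a.
Proof. exact: sumr_ge0. Qed.

Lemma condA_ge0 x a : 0 <= condA q x a.
Proof. by rewrite divr_ge0 ?sumr_ge0. Qed.

Lemma sum_condA_le1 x : \sum_a condA q x a <= 1.
Proof.
rewrite -mulr_suml -/(margX q x).
by have [->|m0] := eqVneq (margX q x) 0; rewrite ?mul0r ?ler01 ?divff.
Qed.

Lemma sum_margA : is_dist (joint q) -> \sum_a margA q a = 1.
Proof. by move=> [_ q1]; rewrite /margA exchange_big pair_bigA. Qed.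

Lemma margA_gt0 x a : 0 < q x a -> 0 < margA q a.
Proof. by move=> qp; apply: lt_le_trans qp (le_margA x a). Qed.

Lemma condA_gt0 x a : 0 < q x a -> 0 < condA q x a.
Proof. by move=> qp; rewrite divr_gt0 // (lt_le_trans qp (le_margX x a)). Qed.

Lemma margX_mul_condA x a : margX q x * condA q x a = q x a.
Proof.
have [m0|m0] := eqVneq (margX q x) 0; last by rewrite mulrC divfK.
by rewrite m0 mul0r; apply/esym/eqP; rewrite eq_le q_ge0 -m0 le_margX.
Qed.

End Marginals.

Section Objective.
Variable R : realType.

Lemma entropyE (T : finType) (p : T -> R) : entropy p = - \sum_t p t * log2 (p t).
Proof. by congr -%R; apply: eq_bigr => t _; case: eqP => [->|]; rewrite ?mul0r. Qed.

Lemma KLdivE (T : finType) (p r : T -> R) : (forall t, p t != 0 -> r t != 0) ->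
  KLdiv p r = (\sum_t p t * log2 (p t / r t))%:E.
Proof.
move=> supp; rewrite /KLdiv -sumEFin; apply: eq_bigr => t _.
by have [->|/supp/negbTE->] := eqVneq (p t) 0; rewrite ?mul0r.
Qed.

Variables (X A : finType) (W : X -> A -> R).

Definition score (q : X -> A -> R) (x : X) (a : A) : R :=
  2 * ln (W x a) - ln (margA q a) - ln (condA q x a).

Definition expected_score (q : X -> A -> R) : R :=
  \sum_x \sum_a q x a * score q x a.

Variable q : X -> A -> R.
Hypothesis q_ge0 : forall x a, 0 <= q x a.
Hypothesis q_supp : forall x a, 0 < q x a -> 0 < W x a.

Lemma mutinfoE : mutinfo q =
  \sum_x \sum_a q x a * (log2 (q x a) - log2 (margX q x) - log2 (margA q a)).
Proof.
have HX : \sum_x margX q x * log2 (margX q x) = \sum_x \sum_a q x a * log2 (margX q x).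
  by apply: eq_bigr => x _; rewrite mulr_suml.
have HA : \sum_a margA q a * log2 (margA q a) = \sum_x \sum_a q x a * log2 (margA q a).
  by rewrite exchange_big; apply: eq_bigr => a _; rewrite mulr_suml.
have HXA : \sum_t joint q t * log2 (joint q t) = \sum_x \sum_a q x a * log2 (q x a).
  by rewrite pair_bigA.
rewrite /mutinfo !entropyE HX HA HXA -!sumrN -!big_split; apply: eq_bigr => x _.
by rewrite -!sumrN -!big_split; apply: eq_bigr => a _ /=; ring.
Qed.

Lemma condKLE : condKL q W = (\sum_x \sum_a q x a * log2 (condA q x a / W x a))%:E.
Proof.
rewrite /condKL -sumEFin; apply: eq_bigr => x _.
rewrite KLdivE -?EFinM; last first.
  move=> a ca0; have qa0 : q x a != 0.
    by apply: contraNneq ca0 => qa; rewrite /condA qa mul0r.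
  by rewrite gt_eqF // q_supp // lt_def qa0 q_ge0.
by rewrite mulr_sumr; congr EFin; apply: eq_bigr => a _; rewrite mulrA margX_mul_condA.
Qed.

Lemma objectiveE : objective W q = (expected_score q / ln 2)%:E.
Proof.
rewrite /objective condKLE mutinfoE -EFinM -EFinB /expected_score; congr EFin.
rewrite mulr_suml mulr_sumr -sumrB; apply: eq_bigr => x _.
rewrite mulr_suml mulr_sumr -sumrB; apply: eq_bigr => a _.
have [->|q0] := eqVneq (q x a) 0; first by rewrite !mul0r mulr0 subr0.
have qp : 0 < q x a by rewrite lt_def q0 q_ge0.
have mXp : 0 < margX q x := lt_le_trans qp (le_margX q_ge0 x a).
have mAp : 0 < margA q a := lt_le_trans qp (le_margA q_ge0 x a).
have Wp := q_supp qp.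
rewrite /score /condA /log2 !ln_div ?posrE ?divr_gt0 //; field.
by rewrite gt_eqF // ln_gt0 // ltr1n.
Qed.

End Objective.

Section ProductChannels.
Variables (R : realType) (X A : finType) (n : nat).
Local Notation XN := {ffun 'I_n -> X}.
Local Notation AN := {ffun 'I_n -> A}.

Lemma sum_triple (F : XN * AN * AN -> R) :
  \sum_z F z = \sum_x \sum_a \sum_b F (x, a, b).
Proof. by rewrite pair_bigA pair_bigA; apply: eq_bigr => -[[x a] b]. Qed.

Lemma Pn_ge0 (W : X -> A -> R) (x : XN) (a b : AN) :
  (forall x a, 0 <= W x a) -> 0 <= Pn W x a b.
Proof.
by move=> W0; rewrite mulr_ge0 ?invr_ge0 ?exprn_ge0 // prodr_ge0 // => i _; rewrite mulr_ge0.
Qed.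

Lemma Pn_gt0_W (W : X -> A -> R) (x : XN) (a b : AN) :
  (forall x a, 0 <= W x a) -> 0 < Pn W x a b -> forall i, 0 < W (x i) (a i) /\ 0 < W (x i) (b i).
Proof.
move=> W0 Pp i; have : W (x i) (a i) * W (x i) (b i) != 0.
  by apply: contraTneq Pp => Wi0; rewrite /Pn (bigD1 i) //= Wi0 mul0r mulr0 ltxx.
by rewrite mulf_eq0 negb_or !lt_def !W0 !andbT => /andP.
Qed.

Lemma ln_Pn (W : X -> A -> R) (x : XN) (a b : AN) : (0 < #|X|)%N ->
  (forall i, 0 < W (x i) (a i) /\ 0 < W (x i) (b i)) ->
  ln (Pn W x a b) =
  - (ln #|X|%:R *+ n) + \sum_i (ln (W (x i) (a i)) + ln (W (x i) (b i))).
Proof.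
move=> X0 Wp; have Xp : 0 < #|X|%:R :> R by rewrite ltr0n.
have Wp2 i : 0 < W (x i) (a i) * W (x i) (b i) by have [] := Wp i; exact: mulr_gt0.
rewrite /Pn lnM ?posrE ?invr_gt0 ?exprn_gt0 ?prodr_gt0 // lnV ?posrE ?exprn_gt0 // lnXn //.
rewrite ln_prod //; congr (_ + _); apply: eq_bigr => i _.
by have [Wa Wb] := Wp i; rewrite lnM.
Qed.

Definition product_test (Q : XN -> AN -> R) (qm qc : 'I_n -> X -> A -> R)
    (x : XN) (a b : AN) : R :=
  Q x a * \prod_i (margA (qm i) (a i) * condA (qc i) (x i) (b i)).

Variables (Q : XN -> AN -> R) (qm qc : 'I_n -> X -> A -> R).
Hypothesis Q_ge0 : forall x a, 0 <= Q x a.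
Hypothesis qm_ge0 : forall i x a, 0 <= qm i x a.
Hypothesis qc_ge0 : forall i x a, 0 <= qc i x a.

Lemma product_test_ge0 (x : XN) (a b : AN) : 0 <= product_test Q qm qc x a b.
Proof.
rewrite mulr_ge0 // prodr_ge0 // => i _.
by rewrite mulr_ge0 ?margA_ge0 ?condA_ge0.
Qed.

Lemma sum_product_test_le1 :
  (forall a, \sum_x Q x a = 1) -> (forall i, is_dist (joint (qm i))) ->
  \sum_x \sum_a \sum_b product_test Q qm qc x a b <= 1.
Proof.
move=> Q1 qm_dist.
have sum_b x a : \sum_b product_test Q qm qc x a b =
    Q x a * \prod_i margA (qm i) (a i) * \prod_i \sum_b condA (qc i) (x i) b.
  rewrite (bigA_distr_bigA (fun i b => condA (qc i) (x i) b)) mulr_sumr.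
  apply: eq_bigr => b _.
  by rewrite /product_test big_split mulrA.
apply: (@le_trans _ _ (\sum_x \sum_a Q x a * \prod_i margA (qm i) (a i))).
  apply: ler_sum => x _; apply: ler_sum => a _; rewrite sum_b.
  rewrite ler_piMr ?mulr_ge0 ?prodr_ge0 // => [i _|]; first exact: margA_ge0.
  by rewrite prodr_ile1 // => i _; rewrite sum_condA_le1 sumr_ge0 // => b _; exact: condA_ge0.
rewrite exchange_big /=; under eq_bigr do rewrite -mulr_suml Q1 mul1r.
by rewrite -(bigA_distr_bigA (fun i a => margA (qm i) a)) big1 // => i _; rewrite sum_margA.
Qed.

Lemma product_test_gt0 (x : XN) (a b : AN) : 0 < Q x a ->
  (forall i, 0 < margA (qm i) (a i)) -> (forall i, 0 < condA (qc i) (x i) (b i)) ->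
  0 < product_test Q qm qc x a b.
Proof. by move=> Qp mp cp; rewrite mulr_gt0 // prodr_gt0 // => i _; rewrite mulr_gt0. Qed.

Lemma ln_product_test (x : XN) (a b : AN) : 0 < Q x a ->
  (forall i, 0 < margA (qm i) (a i)) -> (forall i, 0 < condA (qc i) (x i) (b i)) ->
  ln (product_test Q qm qc x a b) =
  ln (Q x a) + \sum_i (ln (margA (qm i) (a i)) + ln (condA (qc i) (x i) (b i))).
Proof.
move=> Qp mp cp; have mcp i := mulr_gt0 (mp i) (cp i).
rewrite /product_test lnM ?posrE ?prodr_gt0 // ln_prod //.
by congr (_ + _); apply: eq_bigr => i _; rewrite lnM ?posrE.
Qed.

End ProductChannels.

Section TiltedBound.
Variables (R : realType) (X A : finType) (W : X -> A -> R) (n : nat).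
Hypothesis W_ge0 : forall x a, 0 <= W x a.
Hypothesis X_gt0 : (0 < #|X|)%N.
Local Notation XN := {ffun 'I_n -> X}.
Local Notation AN := {ffun 'I_n -> A}.
Local Notation Z := (XN * AN * AN)%type.
Variables Q1 Q2 : XN -> AN -> R.
Hypothesis Q1_ge0 : forall x a, 0 <= Q1 x a.
Hypothesis Q2_ge0 : forall x b, 0 <= Q2 x b.
Hypothesis Q1_sum : forall a, \sum_x Q1 x a = 1.
Hypothesis Q2_sum : forall b, \sum_x Q2 x b = 1.

Definition weight (z : Z) : R :=
  let: (x, a, b) := z in Pn W x a b * Num.sqrt (Q1 x a * Q2 x b).

Hypothesis weight_sum_gt0 : 0 < \sum_z weight z.

Definition tilted (z : Z) : R := weight z / \sum_(z' : Z) weight z'.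

Definition tilt (pick : Z -> AN) (i : 'I_n) : X -> A -> R :=
  pair_law tilted (fun z => (z.1.1 i, pick z i)).

Local Notation tiltA := (tilt (fun z => z.1.2)).
Local Notation tiltB := (tilt (fun z => z.2)).

Definition tilt_score (z : Z) : R := let: (x, a, b) := z in
  - (ln #|X|%:R *+ n) +
  (\sum_i (score W (tiltA i) (x i) (a i) + score W (tiltB i) (x i) (b i))) / 2.

Definition gmean_test (z : Z) : R := let: (x, a, b) := z in
  Num.sqrt (product_test Q1 tiltA tiltB x a b * product_test Q2 tiltB tiltA x b a).

Lemma weight_ge0 z : 0 <= weight z.
Proof. by case: z => [[x a] b]; rewrite mulr_ge0 ?Pn_ge0 ?sqrtr_ge0. Qed.

Lemma tilted_ge0 z : 0 <= tilted z.
Proof. by rewrite divr_ge0 ?weight_ge0 ?ltW. Qed.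

Lemma tilted_dist : is_dist tilted.
Proof. by split; [exact: tilted_ge0|rewrite -mulr_suml divff ?gt_eqF]. Qed.

Lemma tilt_ge0 pick i x a : 0 <= tilt pick i x a.
Proof. exact: sumr_ge0 (fun z _ => tilted_ge0 z). Qed.

Lemma tilt_dist pick i : is_dist (joint (tilt pick i)).
Proof. exact: pair_law_dist tilted_dist. Qed.

Lemma tilt_gt0 pick i z : 0 < weight z -> 0 < tilt pick i (z.1.1 i) (pick z i).
Proof.
by move=> wz; apply: lt_le_trans (le_pair_law _ _ z); [rewrite divr_gt0|exact: tilted_ge0].
Qed.

Lemma weight_gt0 x a b : 0 < weight (x, a, b) ->
  [/\ 0 < Pn W x a b, 0 < Q1 x a & 0 < Q2 x b].
Proof.
move=> /= wz; have /andP[Pn0] : (Pn W x a b != 0) && (Num.sqrt (Q1 x a * Q2 x b) != 0).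
  by rewrite -negb_or -mulf_eq0 gt_eqF.
rewrite sqrtr_eq0 -ltNge lt_def mulf_eq0 negb_or => /andP[/andP[Q1n Q2n] _].
by rewrite !lt_def Pn0 Q1n Q2n Pn_ge0 ?Q1_ge0 ?Q2_ge0.
Qed.

Lemma weight_gt0_W z i : 0 < weight z ->
  0 < W (z.1.1 i) (z.1.2 i) /\ 0 < W (z.1.1 i) (z.2 i).
Proof. by case: z => [[x a] b] /weight_gt0 [Pp _ _]; exact: Pn_gt0_W Pp i. Qed.

Lemma tilt_supp (pick : Z -> AN) i x c :
  (forall z, 0 < weight z -> 0 < W (z.1.1 i) (pick z i)) ->
  0 < tilt pick i x c -> 0 < W x c.
Proof.
move=> pick_supp /(pair_law_gt0 tilted_ge0) [z [[<- <-]]].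
by rewrite pmulr_lgt0 ?invr_gt0 // => /pick_supp.
Qed.

Lemma tiltA_supp i x a : 0 < tiltA i x a -> 0 < W x a.
Proof. by apply: (@tilt_supp (fun z => z.1.2)) => z /(weight_gt0_W i)[]. Qed.

Lemma tiltB_supp i x b : 0 < tiltB i x b -> 0 < W x b.
Proof. by apply: (@tilt_supp (fun z => z.2)) => z /(weight_gt0_W i)[]. Qed.

Lemma sum_gmean_test_le1 : \sum_z gmean_test z <= 1.
Proof.
pose U (z : Z) := let: (x, a, b) := z in product_test Q1 tiltA tiltB x a b.
pose V (z : Z) := let: (x, a, b) := z in product_test Q2 tiltB tiltA x b a.
have U1 : \sum_z U z <= 1.
  rewrite sum_triple; apply: sum_product_test_le1 => // [i x a|i x a|i];
    [exact: tilt_ge0|exact: tilt_ge0|exact: tilt_dist].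
have V1 : \sum_z V z <= 1.
  rewrite sum_triple; under eq_bigr do rewrite exchange_big.
  apply: sum_product_test_le1 => // [i x a|i x a|i];
    [exact: tilt_ge0|exact: tilt_ge0|exact: tilt_dist].
apply: (@le_trans _ _ (\sum_z (U z + V z) / 2)).
  apply: ler_sum => -[[x a] b] _; apply: sqrtrM_le_mean;
  by apply: product_test_ge0 => // i x' a'; exact: tilt_ge0.
by rewrite -mulr_suml big_split /=; lra.
Qed.

Lemma ln_gmean_test z : 0 < weight z ->
  0 < gmean_test z /\ ln (gmean_test z) = ln (weight z) - tilt_score z.
Proof.
case: z => [[x a] b] wz; have [Pp Q1p Q2p] := weight_gt0 wz.
have tAp i : 0 < tiltA i (x i) (a i) := tilt_gt0 _ i wz.
have tBp i : 0 < tiltB i (x i) (b i) := tilt_gt0 _ i wz.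
have mA i := margA_gt0 (tilt_ge0 _ i) (tAp i).
have mB i := margA_gt0 (tilt_ge0 _ i) (tBp i).
have cA i := condA_gt0 (tilt_ge0 _ i) (tAp i).
have cB i := condA_gt0 (tilt_ge0 _ i) (tBp i).
have Up := product_test_gt0 Q1p mA cB; have Vp := product_test_gt0 Q2p mB cA.
split; first by rewrite sqrtr_gt0 mulr_gt0.
have Qp := mulr_gt0 Q1p Q2p.
rewrite /= (ln_sqrt (mulr_gt0 Up Vp)) [in LHS]lnM ?posrE // !ln_product_test //.
rewrite lnM ?posrE ?sqrtr_gt0 // (ln_Pn X_gt0 (Pn_gt0_W W_ge0 Pp)).
rewrite (ln_sqrt Qp) lnM ?posrE //.
have -> : \sum_i (score W (tiltA i) (x i) (a i) + score W (tiltB i) (x i) (b i)) =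
    2 * \sum_i (ln (W (x i) (a i)) + ln (W (x i) (b i)))
  - \sum_i (ln (margA (tiltA i) (a i)) + ln (condA (tiltB i) (x i) (b i)))
  - \sum_i (ln (margA (tiltB i) (b i)) + ln (condA (tiltA i) (x i) (a i))).
  by rewrite mulr_sumr -!sumrB; apply: eq_bigr => i _; rewrite /score; ring.
lra.
Qed.

Lemma expected_tilt_score : \sum_z tilted z * tilt_score z =
  - (ln #|X|%:R *+ n) +
  (\sum_i (expected_score W (tiltA i) + expected_score W (tiltB i))) / 2.
Proof.
have [_ tilted1] := tilted_dist.
have expected_tilt pick i : expected_score W (tilt pick i) =
    \sum_z tilted z * score W (tilt pick i) (z.1.1 i) (pick z i).
  exact: sum_pair_law.
transitivity (\sum_z (tilted z * - (ln #|X|%:R *+ n) + (\sum_i tilted z *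
    (score W (tiltA i) (z.1.1 i) (z.1.2 i) + score W (tiltB i) (z.1.1 i) (z.2 i))) / 2)).
  by apply: eq_bigr => -[[x a] b] _ /=; rewrite -mulr_sumr; ring.
rewrite big_split /= -mulr_suml tilted1 mul1r -mulr_suml exchange_big /=.
congr (_ + _ / 2); apply: eq_bigr => i _.
by rewrite !expected_tilt -big_split; apply: eq_bigr => z _; rewrite mulrDr.
Qed.

Lemma ln_weight_sum_le : ln (\sum_z weight z) <=
  - (ln #|X|%:R *+ n) +
  (\sum_i (expected_score W (tiltA i) + expected_score W (tiltB i))) / 2.
Proof.
rewrite -expected_tilt_score.
apply: gibbs_variational weight_ge0 weight_sum_gt0 _ sum_gmean_test_le1 ln_gmean_test.
by case=> [[x a] b]; exact: sqrtr_ge0.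
Qed.

End TiltedBound.

Section NoSignalling.
Variables (R : realType) (X A : finType) (n : nat).
Local Notation XN := {ffun 'I_n -> X}.
Local Notation AN := {ffun 'I_n -> A}.
Variable Q : XN -> XN -> AN -> AN -> R.
Hypothesis Q_ns : no_signalling Q.

(* By no-signalling the other party's input is irrelevant; it is set equal to one's own. *)
Definition alice_marg (x : XN) (a : AN) : R := \sum_z Q x z a a.
Definition bob_marg (z : XN) (b : AN) : R := \sum_y Q y z b b.

Lemma alice_marg_ge0 x a : 0 <= alice_marg x a.
Proof. by apply: sumr_ge0 => z _; case: Q_ns. Qed.

Lemma bob_marg_ge0 z b : 0 <= bob_marg z b.
Proof. by apply: sumr_ge0 => y _; case: Q_ns. Qed.

Lemma sum_alice_marg a : \sum_x alice_marg x a = 1.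
Proof. by have [_ [Q_sum1 _]] := Q_ns; exact: Q_sum1. Qed.

Lemma sum_bob_marg b : \sum_z bob_marg z b = 1.
Proof. by have [_ [Q_sum1 _]] := Q_ns; rewrite exchange_big; exact: Q_sum1. Qed.

Lemma ns_diag_le_sqrt x a b : Q x x a b <= Num.sqrt (alice_marg x a * bob_marg x b).
Proof.
have [Q0 [_ [QA QB]]] := Q_ns.
apply: le_sqrtrM => //; rewrite /alice_marg /bob_marg.
  by rewrite -(QB x a b a) (bigD1 x) //= lerDl sumr_ge0.
by rewrite -(QA x a b b) (bigD1 x) //= lerDl sumr_ge0.
Qed.

End NoSignalling.

Section ValueBound.
Variables (R : realType) (X A : finType) (W : X -> A -> R).
Hypothesis W_ge0 : forall x a, 0 <= W x a.
Hypothesis X_gt0 : (0 < #|X|)%N.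
Variable c : R.
Hypothesis expected_score_le : forall q, is_dist (joint q) ->
  (forall x a, 0 < q x a -> 0 < W x a) -> expected_score W q <= c.
Variable n : nat.
Local Notation XN := {ffun 'I_n -> X}.
Local Notation AN := {ffun 'I_n -> A}.

Lemma ns_value_le (Q : XN -> XN -> AN -> AN -> R) :
  no_signalling Q -> ns_value W Q <= expR ((c - ln #|X|%:R) *+ n).
Proof.
move=> Q_ns; have [v_le0|v_gt0] := lerP (ns_value W Q) 0.
  exact: le_trans v_le0 (expR_ge0 _).
pose Q1 := alice_marg Q; pose Q2 := bob_marg Q.
have vT : ns_value W Q <= \sum_z weight W Q1 Q2 z.
  rewrite /ns_value sum_triple; apply: ler_sum => x _; apply: ler_sum => a _.
  by apply: ler_sum => b _; rewrite ler_wpM2l ?Pn_ge0 ?ns_diag_le_sqrt.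
have T_gt0 := lt_le_trans v_gt0 vT.
apply: le_trans vT _; rewrite -[leLHS]lnK ?posrE // ler_expR.
have Q1_ge0 := alice_marg_ge0 Q_ns; have Q2_ge0 := bob_marg_ge0 Q_ns.
apply: le_trans (ln_weight_sum_le W_ge0 X_gt0 Q1_ge0 Q2_ge0
  (sum_alice_marg Q_ns) (sum_bob_marg Q_ns) T_gt0) _.
rewrite mulrnBl [leRHS]addrC lerD2l mulr_suml -[in leRHS](card_ord n) -sumr_const.
apply: ler_sum => i _.
have : expected_score W (tilt W Q1 Q2 (fun z => z.1.2) i) <= c.
  by apply: expected_score_le; [exact: tilt_dist|exact: tiltA_supp].
have : expected_score W (tilt W Q1 Q2 (fun z => z.2) i) <= c.
  by apply: expected_score_le; [exact: tilt_dist|exact: tiltB_supp].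
lra.
Qed.

End ValueBound.

Section Witness.
Variables (R : realType) (X A : finType) (n : nat).
Local Notation XN := {ffun 'I_n -> X}.
Local Notation AN := {ffun 'I_n -> A}.

Lemma sum_Pn (W : X -> A -> R) (x : XN) : is_channel W ->
  \sum_a \sum_b Pn W x a b = #|X|%:R ^- n.
Proof.
move=> W_channel; have W1 i : \sum_a W (x i) a = 1 by have [] := W_channel (x i).
under eq_bigr do rewrite -mulr_sumr; rewrite -mulr_sumr.
under eq_bigr do under eq_bigr do rewrite big_split.
under eq_bigr do rewrite -mulr_sumr -(bigA_distr_bigA (fun i b => W (x i) b)).
rewrite -mulr_suml -(bigA_distr_bigA (fun i a => W (x i) a)).
by rewrite !big1 ?mulr1 // => i _; rewrite W1.
Qed.

Definition constant_strategy (x0 : XN) : XN -> XN -> AN -> AN -> R :=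
  fun y z _ _ => ((y == x0) && (z == x0))%:R.

Lemma constant_strategy_ns x0 : no_signalling (constant_strategy x0).
Proof.
have row y a b : \sum_z constant_strategy x0 y z a b = (y == x0)%:R.
  rewrite (bigD1 x0) //= big1 => [|z /negbTE z_x0]; last first.
    by rewrite /constant_strategy z_x0 andbF.
  by rewrite addr0 /constant_strategy eqxx andbT.
split=> [y z a b|]; first by rewrite ler0n.
split=> [a b|]; last by split=> *.
under eq_bigr do rewrite row.
by rewrite (bigD1 x0) //= eqxx big1 ?addr0 // => y /negbTE ->.
Qed.

Lemma ns_value_constant_strategy (W : X -> A -> R) x0 : is_channel W ->
  ns_value W (constant_strategy x0) = #|X|%:R ^- n.
Proof.
move=> W_channel; rewrite /ns_value (bigD1 x0) //= [X in _ + X]big1 ?addr0.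
- rewrite -(sum_Pn x0 W_channel); do 2!apply: eq_bigr => ? _.
  by rewrite /constant_strategy eqxx mulr1.
- move=> x /negbTE x_x0.
  by do 2!(apply: big1 => ? _); rewrite /constant_strategy x_x0 mulr0.
Qed.

End Witness.

Section Omega.
Variables (R : realType) (X A : finType) (W : X -> A -> R).
Hypothesis X_gt0 : (0 < #|X|)%N.
Hypothesis W_channel : is_channel W.
Variable s : R.
Hypothesis objective_le : forall q, is_dist (joint q) ->
  (forall x a, 0 < q x a -> 0 < W x a) -> expected_score W q / ln 2 <= s.
Variable n : nat.
Local Notation XN := {ffun 'I_n -> X}.
Local Notation AN := {ffun 'I_n -> A}.

Lemma log2_omega_ns_le : (0 < n)%N -> log2 (omega_ns W n) / n%:R <= s - log2 #|X|%:R.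
Proof.
move=> n_gt0; have ln2_gt0 : 0 < ln (2 : R) by rewrite ln_gt0 ?ltr1n.
have W_ge0 x a : 0 <= W x a by have [] := W_channel x.
have [x0 _] := card_gt0P X_gt0.
set B := expR ((s * ln 2 - ln #|X|%:R) *+ n).
have value_le (Q : XN -> XN -> AN -> AN -> R) : no_signalling Q -> ns_value W Q <= B.
  apply: (ns_value_le W_ge0 X_gt0 (c := s * ln 2)) => q q_dist q_supp.
  by rewrite -ler_pdivrMr // objective_le.
pose Q0 : XN -> XN -> AN -> AN -> R := constant_strategy R [ffun=> x0].
have omega_le : omega_ns W n <= B.
  apply: ge_sup => [|_ [Q [Q_ns ->]]]; last exact: value_le.
  by exists (ns_value W Q0), Q0; split=> //; exact: constant_strategy_ns.
(* [ln] vanishes on nonpositive reals, so the positivity of [omega_ns] matters. *)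
have omega_gt0 : 0 < omega_ns W n.
  apply: lt_le_trans (_ : ns_value W Q0 <= _).
    by rewrite ns_value_constant_strategy // invr_gt0 exprn_gt0 ?ltr0n.
  apply: ub_le_sup; first by exists B => _ [Q [Q_ns ->]]; exact: value_le.
  by exists Q0; split=> //; exact: constant_strategy_ns.
have : ln (omega_ns W n) <= (s * ln 2 - ln #|X|%:R) *+ n by rewrite -ler_expR lnK.
rewrite /log2 !ler_pdivrMr ?ltr0n // -mulr_natl.
have -> : (s - ln #|X|%:R / ln 2) * n%:R * ln 2 = n%:R * (s * ln 2 - ln #|X|%:R).
  by field; rewrite gt_eqF.
by [].
Qed.

End Omega.

Lemma limn_esup_le (R : realType) (u : (\bar R)^nat) (l : \bar R) :
  (forall n, (0 < n)%N -> (u n <= l)%E) -> (limn_esup u <= l)%E.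
Proof.
move=> u_le; rewrite limn_esup_lim; apply: lime_le; first exact: is_cvg_esups.
exists 1%N => // m /= m_gt0; apply: ge_ereal_sup => _ [k /= mk <-].
exact/u_le/(leq_trans m_gt0 mk).
Qed.

Lemma uniform_input_dist (R : realType) (X A : finType) (W : X -> A -> R) :
  (0 < #|X|)%N -> is_channel W -> is_dist (joint (fun x a => W x a / #|X|%:R)).
Proof.
move=> X_gt0 W_channel; have Xp : 0 < #|X|%:R :> R by rewrite ltr0n.
split=> [[x a]|]; first by rewrite /joint divr_ge0 ?(ltW Xp) ?(W_channel x).1.
rewrite /joint -(pair_bigA _ (fun x a => W x a / #|X|%:R)) /=.
transitivity (\sum_(x : X) #|X|%:R^-1 : R).
  by apply: eq_bigr => x _; rewrite -mulr_suml (W_channel x).2 mul1r.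
by rewrite sumr_const -[_ *+ _]mulr_natl mulfV ?gt_eqF.
Qed.

Theorem mainTheorem3 (R : realType) (X A : finType) (W : X -> A -> R) :
  (0 < #|X|)%N ->
  is_channel W ->
  (limn_esup (fun n : nat => (log2 (omega_ns W n) / n%:R)%:E) <=
   ereal_sup [set objective W q | q in [set q : X -> A -> R | is_dist (joint q)]]
     - (log2 #|X|%:R)%:E)%E.
Proof.
move=> X_gt0 W_channel; set S := ereal_sup _.
have S_ub q : is_dist (joint q) -> (objective W q <= S)%E.
  by move=> q_dist; apply: ereal_sup_ubound; exists q.
have objective_bits q : is_dist (joint q) -> (forall x a, 0 < q x a -> 0 < W x a) ->
    objective W q = (expected_score W q / ln 2)%:E.
  by move=> q_dist; apply: objectiveE => x a; exact: q_dist.1 (x, a).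
case S_eq : S => [s| |]; last 2 first.
- by rewrite leey.
- have q_supp x a : 0 < W x a / #|X|%:R -> 0 < W x a.
    by rewrite pmulr_lgt0 ?invr_gt0 ?ltr0n.
  have q_dist := uniform_input_dist X_gt0 W_channel.
  by have := S_ub _ q_dist; rewrite S_eq objective_bits.
rewrite -EFinB; apply: limn_esup_le => n n_gt0; rewrite lee_fin.
apply: log2_omega_ns_le => // q q_dist q_supp.
by have := S_ub q q_dist; rewrite S_eq objective_bits // lee_fin.
Qed.
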